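(* For every integer $d\ge 2$ and every integer $k$ with $d-1\le k\le\binom{d}{2}$, there exists a chopped vertical strip with $d$ vertices (hence $d-2$ cuts) having exactly $k$ short geodesics.
   Context: A chopped vertical strip with $d$ vertices consists of complex numbers $z_j=x_j+\sqrt{-1}\,y_j$, $j=1,\dots,d$, with pairwise distinct real parts and pairwise distinct imaginary parts, ordered so that $x_1<x_2<\dots<x_d$, together with, for each $j=2,\dots,d-1$, a choice of a vertical ray (cut) starting at $z_j$, either $\{x_j+\sqrt{-1}\,s: s\ge y_j\}$ or $\{x_j+\sqrt{-1}\,s: s\le y_j\}$. A short geodesic of the chopped strip is a straight segment $[z_i,z_j]$, $i\neq j$, that does not intersect any cut except possibly at its own endpoints. *)

From HB Require Import structures.
From mathcomp Require Import all_boot all_order all_algebra.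
From mathcomp Require Import boolp reals.
Set Implicit Arguments. Unset Strict Implicit. Unset Printing Implicit Defensive.
Import Order.TTheory GRing.Theory Num.Theory.
Local Open Scope ring_scope.

(* Vertices are indexed 0-based by 'I_d: vertex j has z_j = (x j, y j).
   Cuts sit at the interior vertices j with 0 < j < d-1.
   up j = true means the cut is the upward ray {x_j + i s : s >= y_j},
   up j = false means the downward ray {x_j + i s : s <= y_j}. *)

Definition chopped_strip (R : realType) (d : nat) (x y : 'I_d -> R) : Prop :=
  (forall i j : 'I_d, (i < j)%N -> x i < x j) /\ injective y.

Definition is_cut_vertex (d : nat) (m : 'I_d) : bool := (0 < m)%N && (m < d.-1)%N.

Definition on_cut (R : realType) (d : nat) (x y : 'I_d -> R) (up : 'I_d -> bool)
  (m : 'I_d) (p : R * R) : Prop :=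
  p.1 = x m /\ (if up m then y m <= p.2 else p.2 <= y m).

Definition seg_pt (R : realType) (d : nat) (x y : 'I_d -> R) (i j : 'I_d) (t : R)
  : R * R :=
  ((1 - t) * x i + t * x j, (1 - t) * y i + t * y j).

Definition short_geodesic (R : realType) (d : nat) (x y : 'I_d -> R)
  (up : 'I_d -> bool) (i j : 'I_d) : Prop :=
  i != j /\
  forall m : 'I_d, is_cut_vertex m ->
  forall t : R, 0 <= t <= 1 ->
    on_cut x y up m (seg_pt x y i j t) ->
    seg_pt x y i j t = (x i, y i) \/ seg_pt x y i j t = (x j, y j).

Definition num_short_geodesics (R : realType) (d : nat) (x y : 'I_d -> R)
  (up : 'I_d -> bool) : nat :=
  #|[set p : 'I_d * 'I_d | (p.1 < p.2)%N && `[< short_geodesic x y up p.1 p.2 >]]|.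

From HB Require Import structures.
From mathcomp Require Import all_boot all_order all_algebra.
From mathcomp Require Import boolp reals.
From mathcomp Require Import ring lra zify.
Import Order.TTheory GRing.Theory Num.Theory.
Set Implicit Arguments. Unset Strict Implicit.
Local Open Scope ring_scope.

(* Put z_m = (m, -2 m^2) for m < d-1 and lift the last vertex by 2(n-s)+1 above
   the parabola; let the cuts point down at the indices up to p = d-1-n and up
   after them.  Since the first d-1 vertices lie on a concave arc, a chord between
   them passes below every intermediate vertex, so it is short iff all
   intermediate cuts point up: this gives the p edges among z_0, ..., z_p and all
   C(n,2) chords among z_p, ..., z_(d-2).  The lift makes a chord into the last
   vertex pass above the upward cut just before it unless the chord is long, and
   exactly s chords (from z_p, ..., z_(p+s-1)) survive, besides the edge from
   z_(d-2).  This gives d-n+C(n,2)+s short geodesics, and for 1 <= n <= d-1,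
   0 <= s < n these numbers cover every value between d-1 and C(d,2). *)

Section ChordTest.
Variables (R : realType) (d : nat) (x y : 'I_d -> R).

(* (x_j - x_i) times the height of z_m above the line through z_i and z_j *)
Definition chord_gap (i j m : 'I_d) : R :=
  (x j - x i) * y m - ((x j - x m) * y i + (x m - x i) * y j).

Definition vertex_param (i j m : 'I_d) : R := (x m - x i) / (x j - x i).

Lemma seg_pt0 (i j : 'I_d) : seg_pt x y i j 0 = (x i, y i).
Proof. by rewrite /seg_pt subr0 !mul0r !addr0 !mul1r. Qed.

Lemma seg_pt1 (i j : 'I_d) : seg_pt x y i j 1 = (x j, y j).
Proof. by rewrite /seg_pt subrr !mul0r !add0r !mul1r. Qed.

Lemma seg_pt_abscissa_inj (i j : 'I_d) (t u : R) : x i != x j ->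
  (seg_pt x y i j t).1 = (seg_pt x y i j u).1 -> t = u.
Proof.
rewrite /seg_pt /= => xij E.
have xji : x j - x i != 0 by rewrite subr_eq0 eq_sym.
have : (t - u) * (x j - x i) = ((1 - t) * x i + t * x j) - ((1 - u) * x i + u * x j).
  by ring.
by rewrite E subrr => /eqP; rewrite mulf_eq0 (negbTE xji) orbF subr_eq0 => /eqP.
Qed.

Lemma seg_pt_abscissa_bounds (i j : 'I_d) (t : R) : x i <= x j -> 0 <= t <= 1 ->
  x i <= (seg_pt x y i j t).1 <= x j.
Proof. by rewrite /seg_pt /= => xij /andP[t0 t1]; apply/andP; split; nra. Qed.

Lemma vertex_param_bounds (i j m : 'I_d) : x i < x j -> x i <= x m <= x j ->
  0 <= vertex_param i j m <= 1.
Proof.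
move=> xij /andP[im mj]; rewrite /vertex_param divr_ge0 ?subr_ge0 ?(ltW xij) //=.
by rewrite ler_pdivrMr ?subr_gt0 // mul1r lerD2r.
Qed.

Lemma seg_pt_vertex_param (i j m : 'I_d) : x i != x j ->
  (seg_pt x y i j (vertex_param i j m)).1 = x m.
Proof. by move=> xij; rewrite /seg_pt /vertex_param /=; field; rewrite subr_eq0 eq_sym. Qed.

Lemma chord_gapE (i j m : 'I_d) : x i != x j ->
  chord_gap i j m = (x j - x i) * (y m - (seg_pt x y i j (vertex_param i j m)).2).
Proof.
by move=> xij; rewrite /chord_gap /seg_pt /vertex_param /=; field; rewrite subr_eq0 eq_sym.
Qed.

Hypothesis x_incr : forall i j : 'I_d, (i < j)%N -> x i < x j.
Variable up : 'I_d -> bool.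

Lemma short_geodesicP (i j : 'I_d) : (i < j)%N ->
  short_geodesic x y up i j <->
  (forall m : 'I_d, (i < m < j)%N -> if up m then 0 < chord_gap i j m else chord_gap i j m < 0).
Proof.
move=> ij; have xij := x_incr ij; have nxij : x i != x j by rewrite lt_eqF.
split.
- move=> [_ short] m /andP[im mj]; have xim := x_incr im; have xmj := x_incr mj.
  have cut_m : is_cut_vertex m by rewrite /is_cut_vertex; have := ltn_ord j; lia.
  have t01 := vertex_param_bounds xij (introT andP (conj (ltW xim) (ltW xmj))).
  have onx := seg_pt_vertex_param m nxij.
  have off_cut : ~ on_cut x y up m (seg_pt x y i j (vertex_param i j m)).
    move=> /(short m cut_m _ t01) [] /(congr1 fst); rewrite onx => /= E.
      by move: xim; rewrite E ltxx.
    by move: xmj; rewrite E ltxx.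
  rewrite chord_gapE // pmulr_rgt0 ?subr_gt0 // pmulr_rlt0 ?subr_gt0 // subr_lt0.
  move: off_cut; rewrite /on_cut onx.
  by case: (up m) => off_cut; rewrite ltNge; apply/negP => ?; apply: off_cut.
- move=> sign; split; first by rewrite neq_ltn ij.
  move=> m _ t t01 [onx ony].
  have /andP[xim xmj] := seg_pt_abscissa_bounds (ltW xij) t01; rewrite onx in xim xmj.
  case: (ltngtP m i) => [mi | im | /val_inj mi].
  + by have := x_incr mi; rewrite ltNge xim.
  + case: (ltngtP m j) => [mj | jm | /val_inj mj].
    * have tE : t = vertex_param i j m.
        by apply: (seg_pt_abscissa_inj nxij); rewrite onx seg_pt_vertex_param.
      have := sign m (introT andP (conj im mj)).
      rewrite chord_gapE // pmulr_rgt0 ?subr_gt0 // pmulr_rlt0 ?subr_gt0 // subr_lt0.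
      by rewrite -tE; case: (up m) ony => ony; rewrite ltNge ony.
    * by have := x_incr jm; rewrite ltNge xmj.
    * right; suff -> : t = 1 by rewrite seg_pt1.
      by apply: (seg_pt_abscissa_inj nxij); rewrite onx seg_pt1 mj.
  + left; suff -> : t = 0 by rewrite seg_pt0.
    by apply: (seg_pt_abscissa_inj nxij); rewrite onx seg_pt0 mi.
Qed.

End ChordTest.

Local Open Scope nat_scope.

Lemma sum_ord_in_range (D a b : nat) :
  \sum_(i < D) ((a <= i) && (i < b) : nat) = minn b D - a.
Proof.
elim: D => [|D IH]; first by rewrite big_ord0; lia.
by rewrite big_ord_recr /= IH; case: (leqP a D); case: (ltnP D b) => /=; lia.
Qed.

Lemma sum_ord_sub_minn (p m : nat) : \sum_(j < m) (j - minn p j.-1) =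
  if m <= p.+1 then m.-1 else p + 'C(m - p, 2).
Proof.
elim: m => [|m IH]; first by rewrite big_ord0.
rewrite big_ord_recr /= IH; case: (leqP m p.+1) => h1; case: (leqP m.+1 p.+1) => h2.
- lia.
- have -> : m.+1 - p = 2 by lia.
  rewrite (_ : 'C(2, 2) = 1) //; lia.
- lia.
- have -> : m.+1 - p = (m - p).+1 by lia.
  rewrite binS bin1; lia.
Qed.

Lemma bin2_range_decomp (N k : nat) : 1 <= N -> N <= k -> k <= 'C(N.+1, 2) ->
  exists n s, [/\ 1 <= n, n <= N, s < n & k = N.+1 - n + 'C(n, 2) + s].
Proof.
elim: N k => [|N IH] k N1 Nk kC; first lia.
have eC : 'C(N.+2, 2) = 'C(N.+1, 2) + N.+1 by rewrite binS bin1.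
case: (leqP k ('C(N.+1, 2)).+1) => kN; last by exists N.+1, (k - 1 - 'C(N.+1, 2)); split; lia.
case: N IH N1 Nk kC eC kN => [|N] IH N1 Nk kC eC kN.
  by exists 1, 0; rewrite bin_small //; split => //; move: kC; rewrite eC bin_small //; lia.
have [n [s [n1 nN sn kE]]] := IH k.-1 isT ltac:(lia) ltac:(lia).
by exists n, s; split; lia.
Qed.

Ltac case_bool_lia := repeat (match goal with
  | |- context [?a <= ?b] => case: (leqP a b) => ?
  | |- context [?a == ?b] => case: (eqVneq a b) => ?
  end); try by [| simpl; lia | exfalso; lia].

Local Open Scope ring_scope.

Section Construction.
Variables (R : realType) (d n s : nat).

Let p := (d.-1 - n)%N.
Let lift := (2 * (n - s)).+1.

Definition last_lift (m : nat) : nat := if m == d.-1 then lift else 0%N.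

Definition strip_x (m : 'I_d) : R := m%:R.
Definition strip_y (m : 'I_d) : R := (last_lift m)%:R - 2 * m%:R ^+ 2.
Definition strip_up (m : 'I_d) : bool := (p < m)%N.

Lemma strip_x_incr (a b : 'I_d) : (a < b)%N -> strip_x a < strip_x b.
Proof. by rewrite ltr_nat. Qed.

Lemma strip_y_inj : injective strip_y.
Proof.
move=> a b; rewrite /strip_y => E; apply: ord_inj.
suff : (last_lift a + 2 * b ^ 2 = last_lift b + 2 * a ^ 2)%N.
  rewrite /last_lift; case: eqP => [ad|_]; case: eqP => [bd|_] E2.
  - by rewrite ad bd.
  - by move: E2; rewrite /lift; lia.
  - by move: E2; rewrite /lift; lia.
  - by apply/eqP; rewrite -(eqn_exp2r _ _ (isT : 0 < 2)%N); apply/eqP; lia.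
apply/eqP; rewrite -(eqr_nat R) !natrD !natrM; apply/eqP.
by move: E; rewrite !expr2; nra.
Qed.

Lemma strip_chord_gap (i j m : 'I_d) : (i < m < j)%N ->
  chord_gap strip_x strip_y i j m =
  ((m : nat)%:R - (i : nat)%:R) * ((2 * (j - m) * (j - i))%:R - (last_lift j)%:R).
Proof.
move=> /andP[im mj]; have := ltn_ord j => jd.
have [li lm] : last_lift i = 0%N /\ last_lift m = 0%N.
  by rewrite /last_lift !ifN_eq //; lia.
rewrite /chord_gap /strip_y /strip_x li lm !natrM !natrB; [ring | lia | lia].
Qed.

Hypotheses (n_gt0 : (0 < n)%N) (n_le : (n <= d.-1)%N) (s_lt : (s < n)%N).

Definition short_pair (i j : nat) : bool :=
  (j == i.+1) || (p <= i)%N && ((j != d.-1) || (lift < 2 * (j - i))%N).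

Lemma short_pair_sign (i j : 'I_d) : (i < j)%N ->
  (forall m : 'I_d, (i < m < j)%N ->
     if strip_up m then (last_lift j < 2 * (j - m) * (j - i))%N
     else (2 * (j - m) * (j - i) < last_lift j)%N) <-> short_pair i j.
Proof.
move=> ij; have jd := ltn_ord j; split.
- move=> sign; apply/negPn/negP; rewrite /short_pair negb_or negb_and => /andP[nji].
  case: (leqP p i) => pi /=.
  + rewrite negb_or negbK => /andP[/eqP jd1 lift_big].
    have md : (j.-1 < d)%N by lia.
    have := sign (Ordinal md); rewrite /strip_up /last_lift /= jd1 eqxx.
    have -> : (p < d.-1.-1)%N by lia.
    have -> : (d.-1 - d.-1.-1 = 1)%N by lia.
    by move=> /(_ ltac:(lia)); rewrite -jd1; lia.
  + move=> _; have md : (i.+1 < d)%N by lia.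
    have := sign (Ordinal md); rewrite /strip_up /=.
    have -> : (p < i.+1)%N = false by lia.
    move=> /(_ ltac:(lia)); rewrite /last_lift; case: eqP => [jd1|_]; last by rewrite ltn0.
    have : (n.+1 <= j - i)%N by rewrite /p in pi; lia.
    rewrite /lift; have -> : (j - i.+1 = (j - i).-1)%N by lia.
    move: (j - i)%N => e; nia.
- move=> /orP[/eqP ji | /andP[pi long]] m /andP[im mj]; first lia.
  rewrite /strip_up; have -> : (p < m)%N by lia.
  by move: long; rewrite /last_lift; case: eqP => _ /=; nia.
Qed.

Lemma strip_shortP (i j : 'I_d) : (i < j)%N ->
  short_geodesic strip_x strip_y strip_up i j <-> short_pair i j.
Proof.
move=> ij; rewrite short_geodesicP //; last exact: strip_x_incr.
rewrite -short_pair_sign //.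
have sign_nat (m : 'I_d) : (i < m < j)%N ->
    (0 < chord_gap strip_x strip_y i j m) = (last_lift j < 2 * (j - m) * (j - i))%N /\
    (chord_gap strip_x strip_y i j m < 0) = (2 * (j - m) * (j - i) < last_lift j)%N.
  move=> imj; have /andP[im mj] := imj; rewrite strip_chord_gap //.
  by rewrite pmulr_rgt0 ?pmulr_rlt0 ?subr_gt0 ?subr_lt0 ?ltr_nat.
split=> sign m imj; have [gt lt] := sign_nat m imj; move: (sign m imj).
  by rewrite gt lt.
by rewrite -gt -lt.
Qed.

Lemma short_pair_column (j : 'I_d) :
  (\sum_(i < d) (((i < j)%N && short_pair i j) : nat) =
   if (j : nat) == d.-1 then s.+1 else j - minn p j.-1)%N.
Proof.
have jd := ltn_ord j; case: eqP => ej.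
- rewrite (eq_bigr (fun i : 'I_d => (((p <= i) && (i < p + s))%N : nat)
     + (((d.-2 <= i) && (i < d.-1))%N : nat))%N); last first.
    by move=> i _; rewrite /short_pair ej /lift /p; case_bool_lia.
  by rewrite big_split /= !sum_ord_in_range /p; lia.
- rewrite (eq_bigr (fun i : 'I_d => (((minn p j.-1 <= i) && (i < j))%N : nat))); last first.
    by move=> i _; rewrite /short_pair; case_bool_lia.
  by rewrite sum_ord_in_range; lia.
Qed.

Lemma strip_num_short_geodesics :
  num_short_geodesics strip_x strip_y strip_up = (p + 'C(n, 2) + s.+1)%N.
Proof.
have d_eq : d = (p + n).+1 by rewrite /p; lia.
have -> : num_short_geodesics strip_x strip_y strip_up =
          (\sum_(i < d) \sum_(j < d) (((i < j)%N && short_pair i j) : nat))%N.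
  rewrite /num_short_geodesics -sum1_card pair_big big_mkcond /=.
  apply: eq_bigr => q _; rewrite inE.
  by case: ltnP => //= ij; case: asboolP => /(strip_shortP ij); case: short_pair.
rewrite exchange_big /= (eq_bigr _ (fun j _ => short_pair_column j)).
rewrite d_eq big_ord_recr /= eqxx.
under eq_bigr => j _ do rewrite ifN_eq ?neq_ltn ?ltn_ord //.
rewrite sum_ord_sub_minn addKn; case: leqP => // pn.
have n1 : n = 1%N by lia.
by rewrite n1 bin_small //; lia.
Qed.

End Construction.

Theorem mainTheorem5 (R : realType) (d k : nat) :
  (2 <= d)%N -> (d.-1 <= k)%N -> (k <= 'C(d, 2))%N ->
  exists (x y : 'I_d -> R) (up : 'I_d -> bool),
    chopped_strip x y /\ num_short_geodesics x y up = k.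
Proof.
move=> d2 dk kC.
have [n [s [n_gt0 n_le s_lt ->]]] : exists n s, [/\ (0 < n)%N, (n <= d.-1)%N, (s < n)%N &
    k = (d.-1.+1 - n + 'C(n, 2) + s)%N].
  by apply: bin2_range_decomp; rewrite ?prednK //; lia.
exists (@strip_x R d), (@strip_y R d n s), (@strip_up d n).
split; first by split; [exact: strip_x_incr | exact: strip_y_inj].
rewrite strip_num_short_geodesics //; lia.
Qed.
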